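(* $\log\mathrm{Time}(s)\in O(\mathrm{Space}(s))$; that is, there is a constant $c$ such that for every term $s$ that reduces to an abstraction in at least one step, $\log\mathrm{Time}(s)\le c\cdot\mathrm{Space}(s)$.
   Context: $\mathsf{L}$-terms (de Bruijn): $s::=n\mid st\mid\lambda s$, size $|n|=1+n$, $|\lambda s|=1+|s|$, $|st|=1+|s|+|t|$. Substitution $k^k_u=u$, $n^k_u=n$ ($n\ne k$), $(st)^k_u=(s^k_u)(t^k_u)$, $(\lambda s)^k_u=\lambda(s^{k+1}_u)$. Reduction (deterministic): $(\lambda s)(\lambda t)\succ s^0_{\lambda t}$; $s\succ s'\Rightarrow st\succ s't$; $t\succ t'\Rightarrow(\lambda s)t\succ(\lambda s)t'$. If $s=s_0\succ\cdots\succ s_j$ with $s_j$ an abstraction, then $\mathrm{Time}(s)=j$ and $\mathrm{Space}(s)=\max_i|s_i|$. *)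

From Stdlib Require Import Arith Reals.

Inductive term : Type :=
| var : nat -> term
| app : term -> term -> term
| lam : term -> term.

Fixpoint size (s : term) : nat :=
  match s with
  | var n => 1 + n
  | app s t => 1 + size s + size t
  | lam s => 1 + size s
  end.

Fixpoint subst (s : term) (k : nat) (u : term) : term :=
  match s with
  | var n => if Nat.eqb n k then u else var n
  | app s t => app (subst s k u) (subst t k u)
  | lam s => lam (subst s (S k) u)
  end.

Inductive step : term -> term -> Prop :=
| stepBeta s t : step (app (lam s) (lam t)) (subst s 0 (lam t))
| stepAppL s s' t : step s s' -> step (app s t) (app s' t)
| stepAppR s t t' : step t t' -> step (app (lam s) t) (app (lam s) t').

Definition is_abstraction (t : term) : Prop :=
  exists u, t = lam u.

Inductive red_space : term -> nat -> term -> nat -> Prop :=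
| rs_refl s : red_space s 0 s (size s)
| rs_step s s' j t m :
    step s s' -> red_space s' j t m ->
    red_space s (S j) t (Nat.max (size s) m).

Definition time_space (s : term) (j m : nat) : Prop :=
  exists t, red_space s j t m /\ is_abstraction t.

(* A reduction sequence ending in an abstraction never repeats a term: the
   reduction relation is deterministic and abstractions are normal, so a
   repetition would be a cycle from which no normal form is reachable.  Hence
   a reduction of length j visits j + 1 distinct terms, all of size at most
   Space(s).  A prefix-free binary code of length at most 3|s| shows that there
   are fewer than 2^(3m+1) terms of size at most m, so j < 2^(3m+1) <= 2^(4m). *)

From Pilot Require Import Defs.
From Stdlib Require Import Reals Lia Lra List FinFun.
Import ListNotations.

Section DeterministicRelation.

Variable A : Type.
Variable R : A -> A -> Prop.

Hypothesis R_det : forall x y z, R x y -> R x z -> y = z.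

Definition normal (x : A) : Prop := forall y, ~ R x y.

Inductive nsteps : nat -> A -> A -> Prop :=
| nsteps0 x : nsteps 0 x x
| nstepsS n x y z : R x y -> nsteps n y z -> nsteps (S n) x z.

Lemma nsteps_trans n k x y z : nsteps n x y -> nsteps k y z -> nsteps (n + k) x z.
Proof. induction 1; intros; simpl; [assumption | econstructor; eauto]. Qed.

Lemma nsteps_normal_length n k x y z :
  nsteps n x y -> normal y -> nsteps k x z -> normal z -> n = k.
Proof.
  intros Hn Hy; revert k; induction Hn as [x | n x x' y Hx Hn IH];
    intros k Hk Hz; inversion Hk as [| k' ? x'' ? Hx' Hk']; subst.
  - reflexivity.
  - exfalso; eapply Hy; eauto.
  - exfalso; eapply Hz; eauto.
  - rewrite (R_det _ _ _ Hx Hx') in IH; f_equal; auto.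
Qed.

Lemma nsteps_cycle_not_normalizing n k x y :
  nsteps (S k) x x -> nsteps n x y -> normal y -> False.
Proof.
  intros Hcyc Hn Hy.
  pose proof (nsteps_normal_length _ _ _ _ _ (nsteps_trans _ _ _ _ _ Hcyc Hn) Hy Hn Hy).
  lia.
Qed.

End DeterministicRelation.

Arguments normal {A} R x.
Arguments nsteps {A} R n x y.

Lemma step_det s t t' : step s t -> step s t' -> t = t'.
Proof.
  intros H; revert t'; induction H; intros t'' H'; inversion H'; subst;
    try match goal with H : step (lam _) _ |- _ => inversion H end;
    f_equal; auto.
Qed.

Lemma lam_normal u : normal step (lam u).
Proof. intros t H; inversion H. Qed.

Lemma red_space_nsteps s j t m : red_space s j t m -> nsteps step j s t.
Proof. induction 1; econstructor; eauto. Qed.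

Lemma red_space_size_le s j t m : red_space s j t m -> (size s <= m)%nat.
Proof. induction 1; lia. Qed.

Lemma size_pos s : (1 <= size s)%nat.
Proof. destruct s; simpl; lia. Qed.

Lemma red_space_trace s j t m : red_space s j t m -> normal step t ->
  exists l, length l = S j /\ NoDup l /\
    forall x, In x l -> (size x <= m)%nat /\ exists k, nsteps step k s x.
Proof.
  intros Hr Ht; induction Hr as [s | s s' j t m Hs Hr IH].
  - exists [s]; split; [reflexivity | split].
    + repeat constructor; intros [].
    + intros x [<- | []]; split; [lia | exists 0%nat; constructor].
  - destruct (IH Ht) as [l [Hlen [Hnd Hl]]].
    exists (s :: l); split; [simpl; lia | split].
    + constructor; [| assumption].
      intros Hin; destruct (Hl s Hin) as [_ [k Hk]].
      apply (nsteps_cycle_not_normalizing _ _ step_det (S j) k s t);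
        [econstructor; eauto | econstructor; eauto using red_space_nsteps | exact Ht].
    + intros x [<- | Hin]; [split; [lia | exists 0%nat; constructor] |].
      destruct (Hl x Hin) as [Hx [k Hk]]; split; [lia |].
      exists (S k); econstructor; eauto.
Qed.

(* Variables are written in unary, so the code is prefix-free. *)
Fixpoint encode (s : term) : list bool :=
  match s with
  | var n => false :: false :: repeat true n ++ [false]
  | lam s => false :: true :: encode s
  | Defs.app s t => true :: encode s ++ encode t
  end.

Lemma unary_prefix_inj n n' r r' :
  repeat true n ++ false :: r = repeat true n' ++ false :: r' -> n = n' /\ r = r'.
Proof.
  revert n'; induction n as [| n IH]; intros [| n'] H; simpl in H;
    inversion H as [H']; subst; auto.
  destruct (IH n' H'); subst; auto.
Qed.

Lemma encode_prefix_inj s s' r r' :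
  encode s ++ r = encode s' ++ r' -> s = s' /\ r = r'.
Proof.
  revert s' r r'; induction s as [n | a IHa b IHb | a IHa];
    intros [n' | a' b' | a'] r r' H; simpl in H; try discriminate H;
    injection H as H; rewrite <- ?app_assoc in H; simpl in H.
  - destruct (unary_prefix_inj _ _ _ _ H); subst; auto.
  - destruct (IHa _ _ _ H) as [-> H1]; destruct (IHb _ _ _ H1); subst; auto.
  - destruct (IHa _ _ _ H); subst; auto.
Qed.

Lemma encode_inj : Injective encode.
Proof.
  intros s s' H; apply (encode_prefix_inj s s' [] []); rewrite !app_nil_r; exact H.
Qed.

Lemma encode_length s : (length (encode s) <= 3 * size s)%nat.
Proof. induction s; simpl; rewrite ?length_app, ?repeat_length; simpl; lia. Qed.

Fixpoint bitstrings_upto (n : nat) : list (list bool) :=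
  match n with
  | 0 => [[]]
  | S n => [] :: map (cons true) (bitstrings_upto n) ++ map (cons false) (bitstrings_upto n)
  end.

Lemma bitstrings_upto_length n : (length (bitstrings_upto n) < 2 ^ S n)%nat.
Proof. induction n; simpl in *; rewrite ?length_app, ?length_map; lia. Qed.

Lemma in_bitstrings_upto n w : (length w <= n)%nat -> In w (bitstrings_upto n).
Proof.
  revert w; induction n as [| n IH]; intros [| b w] H; simpl in *; try lia; auto.
  right; apply in_or_app.
  destruct b; [left | right]; apply in_map, IH; lia.
Qed.

Lemma NoDup_terms_size_le_length l m :
  NoDup l -> (forall x, In x l -> (size x <= m)%nat) -> (length l < 2 ^ S (3 * m))%nat.
Proof.
  intros Hnd Hl.
  rewrite <- (length_map encode l).
  eapply Nat.le_lt_trans; [| apply bitstrings_upto_length].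
  apply NoDup_incl_length; [apply Injective_map_NoDup; [apply encode_inj | exact Hnd] |].
  intros w Hw; apply in_map_iff in Hw; destruct Hw as [x [<- Hx]].
  apply in_bitstrings_upto.
  pose proof (encode_length x); pose proof (Hl x Hx); lia.
Qed.

Lemma time_le_exp_space s j m : time_space s j m -> (j <= 2 ^ (4 * m))%nat.
Proof.
  intros [t [Hr [u ->]]].
  destruct (red_space_trace _ _ _ _ Hr (lam_normal u)) as [l [Hlen [Hnd Hl]]].
  pose proof (NoDup_terms_size_le_length l m Hnd (fun x Hx => proj1 (Hl x Hx))).
  pose proof (Nat.le_trans _ _ _ (size_pos s) (red_space_size_le _ _ _ _ Hr)).
  assert (2 ^ S (3 * m) <= 2 ^ (4 * m))%nat by (apply Nat.pow_le_mono_r; lia).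
  lia.
Qed.

Lemma ln_le_compat x y : (0 < x -> x <= y -> ln x <= ln y)%R.
Proof.
  intros Hx [Hlt | ->]; [left; apply ln_increasing |]; lra.
Qed.

Open Scope R_scope.

Theorem theorem21 :
  exists c : R, forall (s : term) (j m : nat),
    time_space s j m -> (1 <= j)%nat ->
    ln (INR j) <= c * INR m.
Proof.
  exists (4 * ln 2); intros s j m Hts Hj.
  apply Rle_trans with (ln (INR (2 ^ (4 * m)))).
  - apply ln_le_compat; [apply lt_0_INR; lia | apply le_INR, (time_le_exp_space s); exact Hts].
  - rewrite pow_INR, ln_pow, mult_INR by (simpl; lra).
    replace (INR 2) with 2 by (simpl; lra); replace (INR 4) with 4 by (simpl; lra).
    lra.
Qed.
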